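(* For any essentially distributed Petri net $N$ there is an LSGA net $N'$ with $N'\approx^\Delta_{bSTb}N$.
   Context: Fix visible actions $\mathrm{Act}$ and $\tau\notin\mathrm{Act}$. A Petri net $N=(S,T,F,M_0,\ell)$: $S,T$ disjoint, $F:(S\times T)\cup(T\times S)\to\mathbb N$, $M_0\in\mathbb N^S$, $\ell:T\to\mathrm{Act}\cup\{\tau\}$. ${}^\bullet x(y)=F(y,x)$, $x^\bullet(y)=F(x,y)$ (multisets, extended additively); for a finite nonempty multiset $G$ of transitions $M[G\rangle M'$ iff ${}^\bullet G\le M$ and $M'=M-{}^\bullet G+G^\bullet$; reachable markings as usual; $t\smile u$ iff $M[\{t\}+\{u\}\rangle$ for some reachable $M$. Essentially distributed: there is a function $D$ on $S\cup T$ such that (1) $s\in{}^\bullet t\Rightarrow D(t)=D(s)$, and (2') for all $t,u\in T$, if $t\smile u$ and $\ell(t)\ne\tau$ then $D(t)\ne D(u)$. Components and LSGA nets: a component with interface is $(N,I,O)$ with $I,O\subseteq S$, $I\cap O=\emptyset$ and $o^\bullet=\emptyset$ for all $o\in O$. It is sequential iff there is $Q\subseteq S\setminus(I\cup O)$ such that for every $t\in T$, $|{}^\bullet t\restriction Q|=1$ and $|t^\bullet\restriction Q|=1$, and $|M_0\restriction Q|=1$ (cardinality with multiplicity). Given components $((S_k,T_k,F_k,M_{0k},\ell_k),I_k,O_k)$, $k\in K$, with $(S_k\cup T_k)\cap(S_l\cup T_l)=(I_k\cup O_k)\cap(I_l\cup O_l)$ and $I_k\cap I_l=\emptyset$ for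 $k\ne l$, their asynchronous parallel composition is $((\bigcup S_k,\bigcup T_k,\bigcup F_k,\sum M_{0k},\bigcup\ell_k),\bigcup I_k,\bigcup O_k\setminus\bigcup I_k)$. A net $N$ is an LSGA net iff $(N,I,O)$ is the asynchronous parallel composition of some family of sequential components, for some $I,O$. $\approx^\Delta_{bSTb}$: LTS notation: $\Rightarrow$ reflexive transitive closure of $\xrightarrow{\tau}$; $\mathfrak M\xrightarrow{(\alpha)}\mathfrak M'$ iff $\mathfrak M\xrightarrow{\alpha}\mathfrak M'$ or ($\alpha=\tau$ and $\mathfrak M=\mathfrak M'$). A branching bisimulation with explicit divergence is a relation $\mathcal B$ between the states of two LTSs, relating initial states, such that if $\mathfrak M_1\mathcal B\mathfrak M_2$ and $\mathfrak M_1\xrightarrow{\alpha}\mathfrak M_1'$ then $\mathfrak M_2\Rightarrow\mathfrak M_2^\dagger\xrightarrow{(\alpha)}\mathfrak M_2'$ with $\mathfrak M_1\mathcal B\mathfrak M_2^\dagger$, $\mathfrak M_1'\mathcal B\mathfrak M_2'$, and symmetrically; and if $\mathfrak M_1\mathcal B\mathfrak M_2$ and there is an infinite $\tau$-sequence from $\mathfrak M_1$ all of whose states are related to $\mathfrak M_2$, then there is an infinite $\tau$-sequence from $\mathfrak M_2$ such that every state of the first is related to every state of the second, and symmetrically. ST-LTS of a net: states $(M,U)\in\mathbb N^S\times T^*$, initial $(M_0,\varepsilon)$; $(M,U)\xrightarrow{a^+}(M-{}^\bullet t,Ut)$ iff $\ell(t)=a\in\mathrm{Act}$ and $M[t\rangle$;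 $(M,U)\xrightarrow{a^{-n}}(M+t^\bullet,U^{-n})$ iff the $n$-th element $t$ of $U$ has label $a$ ($U^{-n}$ removes it); $(M,U)\xrightarrow{\tau}(M',U)$ iff $M[t\rangle M'$ with $\ell(t)=\tau$. $N_1\approx^\Delta_{bSTb}N_2$ iff their ST-LTSs are related by a branching bisimulation with explicit divergence. *)

From Stdlib Require Import List Arith Relations.
Import ListNotations.
Unset Implicit Arguments.

(** A Petri net over visible actions [Act]; label [None] is tau.
    S and T are disjoint since they are distinct types. *)
Record net (Act : Type) := Net {
  place : Type;
  trans : Type;
  pre   : place -> trans -> nat;
  post  : trans -> place -> nat;
  init  : place -> nat;
  lab   : trans -> option Act
}.
Arguments place {Act}. Arguments trans {Act}. Arguments pre {Act}.
Arguments post {Act}. Arguments init {Act}. Arguments lab {Act}.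

Definition marking {Act} (N : net Act) := place N -> nat.

Definition enabled {Act} (N : net Act) (M : marking N) (t : trans N) : Prop :=
  forall s, pre N s t <= M s.

Definition fires {Act} (N : net Act) (M : marking N) (t : trans N) (M' : marking N) : Prop :=
  enabled N M t /\ forall s, M' s = M s - pre N s t + post N t s.

Inductive reachable {Act} (N : net Act) : marking N -> Prop :=
| reach_init : reachable N (init N)
| reach_step : forall M t M', reachable N M -> fires N M t M' -> reachable N M'.

Definition concurrent {Act} (N : net Act) (t u : trans N) : Prop :=
  exists M, reachable N M /\ forall s, pre N s t + pre N s u <= M s.

Definition ess_distributed {Act} (N : net Act) : Prop :=
  exists (Loc : Type) (DS : place N -> Loc) (DT : trans N -> Loc),
    (forall s t, 0 < pre N s t -> DT t = DS s) /\
    (forall t u, concurrent N t u -> lab N t <> None -> DT t <> DT u).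

Inductive stlab (Act : Type) :=
| Start : Act -> stlab Act
| Term  : Act -> nat -> stlab Act
| Tau   : stlab Act.
Arguments Tau {Act}. Arguments Start {Act}. Arguments Term {Act}.

Definition ststate {Act} (N : net Act) : Type := (marking N * list (trans N))%type.

(** U^{-n}: remove the n-th element (1-indexed) *)
Definition remove_nth {A} (n : nat) (U : list A) : list A :=
  firstn (n - 1) U ++ skipn n U.

Inductive st_step {Act} (N : net Act) : ststate N -> stlab Act -> ststate N -> Prop :=
| st_start : forall M U t a,
    lab N t = Some a -> enabled N M t ->
    st_step N (M, U) (Start a) (fun s => M s - pre N s t, U ++ [t])
| st_term : forall M U t a n,
    1 <= n -> nth_error U (n - 1) = Some t -> lab N t = Some a ->
    st_step N (M, U) (Term a n) (fun s => M s + post N t s, remove_nth n U)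
| st_tau : forall M M' U t,
    lab N t = None -> fires N M t M' ->
    st_step N (M, U) Tau (M', U).

Definition st_init {Act} (N : net Act) : ststate N := (init N, []).

Section BB.
Variables (L St1 St2 : Type) (tau : L).
Variables (step1 : St1 -> L -> St1 -> Prop) (step2 : St2 -> L -> St2 -> Prop).

Definition tau_star {St} (step : St -> L -> St -> Prop) : relation St :=
  clos_refl_trans St (fun p q => step p tau q).

Definition opt_step {St} (step : St -> L -> St -> Prop) (p : St) (a : L) (q : St) : Prop :=
  step p a q \/ (a = tau /\ p = q).

Definition transfer {A B} (stepA : A -> L -> A -> Prop) (stepB : B -> L -> B -> Prop)
  (R : A -> B -> Prop) : Prop :=
  forall p q a p', R p q -> stepA p a p' ->
    exists q1 q', tau_star stepB q q1 /\ opt_step stepB q1 a q' /\ R p q1 /\ R p' q'.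

Definition divergence {A B} (stepA : A -> L -> A -> Prop) (stepB : B -> L -> B -> Prop)
  (R : A -> B -> Prop) : Prop :=
  forall p q (f : nat -> A), R p q -> f 0 = p ->
    (forall i, stepA (f i) tau (f (S i))) -> (forall i, R (f i) q) ->
    exists g : nat -> B, g 0 = q /\ (forall i, stepB (g i) tau (g (S i))) /\
      forall i j, R (f i) (g j).

Definition bb_div (R : St1 -> St2 -> Prop) (i1 : St1) (i2 : St2) : Prop :=
  R i1 i2 /\
  transfer step1 step2 R /\ transfer step2 step1 (fun q p => R p q) /\
  divergence step1 step2 R /\ divergence step2 step1 (fun q p => R p q).
End BB.

Definition bSTb_div_equiv {Act} (N1 N2 : net Act) : Prop :=
  exists R : ststate N1 -> ststate N2 -> Prop,
    bb_div (stlab Act) (ststate N1) (ststate N2) Tau (st_step N1) (st_step N2) R (st_init N1) (st_init N2).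

(** Components are sub-structures of the composite net N (whose places and
    transitions form the common universe).  Component data outside its own
    places/transitions are required to be 0 (they are not part of it). *)
Record component {Act : Type} (N : net Act) := Comp {
  cS   : place N -> Prop;
  cT   : trans N -> Prop;
  cpre : place N -> trans N -> nat;
  cpost: trans N -> place N -> nat;
  cinit: place N -> nat;
  clab : trans N -> option Act;
  cI   : place N -> Prop;
  cO   : place N -> Prop
}.
Arguments cS {Act N}. Arguments cT {Act N}. Arguments cpre {Act N}.
Arguments cpost {Act N}. Arguments cinit {Act N}. Arguments clab {Act N}.
Arguments cI {Act N}. Arguments cO {Act N}.

Definition card1_on {P} (m : P -> nat) (Q : P -> Prop) : Prop :=
  exists q, Q q /\ m q = 1 /\ forall q', Q q' -> q' <> q -> m q' = 0.

Definition is_component {Act} {N : net Act} (C : component N) : Prop :=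
  (forall s t, (~ cS C s \/ ~ cT C t) -> cpre C s t = 0 /\ cpost C t s = 0) /\
  (forall s, ~ cS C s -> cinit C s = 0) /\
  (forall s, cI C s -> cS C s) /\ (forall s, cO C s -> cS C s) /\
  (forall s, ~ (cI C s /\ cO C s)) /\
  (forall o t, cO C o -> cT C t -> cpre C o t = 0).

Definition is_sequential {Act} {N : net Act} (C : component N) : Prop :=
  is_component C /\
  exists Q : place N -> Prop,
    (forall q, Q q -> cS C q /\ ~ cI C q /\ ~ cO C q) /\
    (forall t, cT C t -> card1_on (fun q => cpre C q t) Q /\ card1_on (fun q => cpost C t q) Q) /\
    card1_on (cinit C) Q.

Definition is_sum {K} (f : K -> nat) (n : nat) : Prop :=
  exists l : list K, NoDup l /\ (forall k, f k <> 0 -> In k l) /\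
    n = fold_right plus 0 (map f l).

(** N is the asynchronous parallel composition of the family C (the net part;
    the resulting interface is determined by the family). *)
Definition is_async_composition {Act} (N : net Act) (K : Type) (C : K -> component N) : Prop :=
  (forall k l, k <> l ->
     (forall s, (cS (C k) s /\ cS (C l) s) <->
                ((cI (C k) s \/ cO (C k) s) /\ (cI (C l) s \/ cO (C l) s))) /\
     (forall t, ~ (cT (C k) t /\ cT (C l) t)) /\
     (forall s, ~ (cI (C k) s /\ cI (C l) s))) /\
  (forall s, exists k, cS (C k) s) /\
  (forall t, exists k, cT (C k) t) /\
  (forall k s t, cT (C k) t -> pre N s t = cpre (C k) s t /\ post N t s = cpost (C k) t s) /\
  (forall k t, cT (C k) t -> lab N t = clab (C k) t) /\
  (forall s, is_sum (fun k => cinit (C k) s) (init N s)).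

Definition LSGA {Act} (N : net Act) : Prop :=
  exists (K : Type) (C : K -> component N),
    (forall k, is_sequential (C k)) /\ is_async_composition N K C.

(* Give every location of the distribution its own control place, marked once
   initially, which each transition of that location consumes and returns.  The
   transitions of one location together with its control place then form a
   sequential component, and the places of the location (the preplaces of its
   transitions) are its input interface.  The control place blocks the start of
   a transition only while another transition of the same location is still
   running; essential distributedness says that this never happens in the
   original net, because a visible transition in flight is concurrent with any
   transition enabled alongside it.  Hence the ST-state (M, U) of N corresponds
   to the unique ST-state of the new net that agrees with M on the old places
   and marks the control place of L iff no transition of U is located at L; this
   correspondence is a step-preserving isomorphism of the reachable parts. *)
From Stdlib Require Import List Lia Relations ClassicalEpsilon FunctionalExtensionality.
Import ListNotations.

Section EmbeddingBisimulation.
Variables (L A B : Type) (tau : L).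
Variables (stepA : A -> L -> A -> Prop) (stepB : B -> L -> B -> Prop).
Variables (emb : B -> A) (Inv : B -> Prop).
Hypothesis emb_inj : forall q q', emb q = emb q' -> q = q'.
Hypothesis Inv_step : forall q a q', Inv q -> stepB q a q' -> Inv q'.
Hypothesis emb_step : forall q a q', Inv q -> stepB q a q' -> stepA (emb q) a (emb q').
Hypothesis emb_step_inv :
  forall q a p', Inv q -> stepA (emb q) a p' -> exists q', stepB q a q' /\ p' = emb q'.

Definition emb_graph (p : A) (q : B) : Prop := Inv q /\ p = emb q.

Lemma emb_graph_transfer : transfer L tau stepA stepB emb_graph.
Proof.
  intros p q a p' [Hq ->] Hst.
  destruct (emb_step_inv q a p' Hq Hst) as (q' & Hst' & ->).
  exists q, q'. split; [apply rt_refl | split; [left; exact Hst' |]].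
  split; split; eauto.
Qed.

Lemma emb_graph_transfer_inv : transfer L tau stepB stepA (fun q p => emb_graph p q).
Proof.
  intros q p a q' [Hq ->] Hst.
  exists (emb q), (emb q'). split; [apply rt_refl | split; [left; auto |]].
  split; split; eauto.
Qed.

(* The divergence is answered by a tau-loop at [q]: by injectivity of [emb], the
   step answering [emb q -tau-> emb q] returns to [q]. *)
Lemma emb_graph_divergence : divergence L tau stepA stepB emb_graph.
Proof.
  intros p q f _ _ Hf Hrel.
  exists (fun _ => q). split; [reflexivity | split; [|intros i j; apply Hrel]].
  intros _. destruct (Hrel 0) as [Hq E0], (Hrel 1) as [_ E1].
  specialize (Hf 0). rewrite E0, E1 in Hf.
  destruct (emb_step_inv q tau (emb q) Hq Hf) as (q' & Hst & E).
  rewrite (emb_inj q' q (eq_sym E)) in Hst. exact Hst.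
Qed.

Lemma emb_graph_divergence_inv : divergence L tau stepB stepA (fun q p => emb_graph p q).
Proof.
  intros q p f _ _ Hf Hrel.
  exists (fun _ => p). split; [reflexivity | split; [|intros i j; apply Hrel]].
  intros _. destruct (Hrel 0) as [Hq E0], (Hrel 1) as [_ E1].
  rewrite E0 at 1. rewrite E1. exact (emb_step _ _ _ Hq (Hf 0)).
Qed.

Lemma emb_graph_bb_div (i : B) : Inv i -> bb_div L A B tau stepA stepB emb_graph (emb i) i.
Proof.
  intros Hi. repeat split; auto using emb_graph_transfer, emb_graph_transfer_inv,
    emb_graph_divergence, emb_graph_divergence_inv.
Qed.
End EmbeddingBisimulation.

Definition msum {X} (f : X -> nat) (U : list X) : nat := list_sum (map f U).

Lemma msum_app {X} (f : X -> nat) (U V : list X) : msum f (U ++ V) = msum f U + msum f V.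
Proof. unfold msum. rewrite map_app. apply list_sum_app. Qed.

Lemma msum_In_le {X} (f : X -> nat) (U : list X) (x : X) : In x U -> f x <= msum f U.
Proof.
  unfold msum. induction U as [|y U IH]; simpl; [tauto|].
  intros [->|Hx]; [lia | specialize (IH Hx); lia].
Qed.

Lemma msum_zero {X} (f : X -> nat) (U : list X) : (forall x, In x U -> f x = 0) -> msum f U = 0.
Proof.
  unfold msum. induction U as [|y U IH]; intros H; simpl; [reflexivity|].
  rewrite H, IH; [reflexivity | | left; reflexivity].
  intros x Hx. apply H. right. exact Hx.
Qed.

Lemma remove_nth_split {X} (n : nat) (U : list X) (x : X) :
  1 <= n -> nth_error U (n - 1) = Some x ->
  exists U1 U2, U = U1 ++ x :: U2 /\ remove_nth n U = U1 ++ U2.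
Proof.
  intros Hn Hx. destruct (nth_error_split U (n - 1) Hx) as (U1 & U2 & -> & Hlen).
  exists U1, U2. split; [reflexivity|]. unfold remove_nth.
  rewrite firstn_app, skipn_app, firstn_all2, skipn_all2 by lia.
  replace (n - 1 - length U1) with 0 by lia. replace (n - length U1) with 1 by lia.
  rewrite app_nil_r. reflexivity.
Qed.

Lemma msum_remove_nth {X} (f : X -> nat) (n : nat) (U : list X) (x : X) :
  1 <= n -> nth_error U (n - 1) = Some x -> msum f U = msum f (remove_nth n U) + f x.
Proof.
  intros Hn Hx. destruct (remove_nth_split n U x Hn Hx) as (U1 & U2 & -> & ->).
  rewrite !msum_app. unfold msum. simpl. lia.
Qed.

Lemma In_remove_nth {X} (n : nat) (U : list X) (x y : X) :
  1 <= n -> nth_error U (n - 1) = Some x -> In y (remove_nth n U) -> In y U.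
Proof.
  intros Hn Hx. destruct (remove_nth_split n U x Hn Hx) as (U1 & U2 & -> & ->).
  rewrite !in_app_iff. simpl. tauto.
Qed.

Definition when (P : Prop) (n : nat) : nat :=
  if excluded_middle_informative P then n else 0.

Notation ind P := (when P 1).

Lemma when_true (P : Prop) (n : nat) : P -> when P n = n.
Proof. unfold when. destruct (excluded_middle_informative P); tauto. Qed.

Lemma when_false (P : Prop) (n : nat) : ~ P -> when P n = 0.
Proof. unfold when. destruct (excluded_middle_informative P); tauto. Qed.

Section LocatedNet.
Variables (Act : Type) (N : net Act) (Loc : Type) (DT : trans N -> Loc).

(* The place [inr L] is the control place of location [L]. *)
Definition located_net : net Act :=
  @Net Act (place N + Loc)%type (trans N)
    (fun x t => match x with inl s => pre N s t | inr L => ind (DT t = L) end)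
    (fun t x => match x with inl s => post N t s | inr L => ind (DT t = L) end)
    (fun x => match x with inl s => init N s | inr _ => 1 end)
    (lab N).

Local Notation N' := located_net.

Definition count_at (L : Loc) (U : list (trans N)) : nat := msum (fun u => ind (DT u = L)) U.

Definition undo_starts (M : marking N) (U : list (trans N)) : marking N :=
  fun s => M s + msum (pre N s) U.

Definition st_inv (q : ststate N) : Prop :=
  let (M, U) := q in
  reachable N (undo_starts M U) /\ (forall u, In u U -> lab N u <> None) /\
  forall L, count_at L U <= 1.

(* Under [st_inv], [1 - count_at L U] marks the control place of [L] exactly
   when no transition in flight is located at [L]. *)
Definition embed_marking (M : marking N) (U : list (trans N)) : marking N' :=
  fun x => match x with inl s => M s | inr L => 1 - count_at L U end.

Definition embed (q : ststate N) : ststate N' := let (M, U) := q in (embed_marking M U, U).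

Lemma embed_injective (q q' : ststate N) : embed q = embed q' -> q = q'.
Proof.
  destruct q as [M U], q' as [M' U']. simpl. intros E. injection E as EM ->.
  f_equal. apply functional_extensionality. intros s.
  exact (f_equal (fun m => m (inl s)) EM).
Qed.

Lemma reachable_ext (M M2 : marking N) :
  reachable N M -> (forall s, M s = M2 s) -> reachable N M2.
Proof. intros H E. replace M2 with M; [exact H | apply functional_extensionality, E]. Qed.

Lemma st_inv_init : st_inv (st_init N).
Proof.
  split; [|split]; simpl.
  - apply (reachable_ext _ _ (reach_init N)). intros s. unfold undo_starts, msum. simpl. lia.
  - tauto.
  - intros L. unfold count_at, msum. simpl. lia.
Qed.

Lemma enabled_of_located (M : marking N) (U : list (trans N)) (t : trans N) :
  enabled N' (embed_marking M U) t -> enabled N M t.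
Proof. intros He s. exact (He (inl s)). Qed.

Lemma embed_start (M : marking N) (U : list (trans N)) (t : trans N) :
  embed_marking (fun s => M s - pre N s t) (U ++ [t])
  = fun x => embed_marking M U x - pre N' x t.
Proof.
  apply functional_extensionality. intros [s|L]; cbn -[Nat.sub]; [reflexivity|].
  unfold count_at. rewrite msum_app. unfold msum at 2. cbn -[Nat.sub]. lia.
Qed.

Lemma embed_term (M : marking N) (U : list (trans N)) (n : nat) (t : trans N) :
  (forall L, count_at L U <= 1) -> 1 <= n -> nth_error U (n - 1) = Some t ->
  embed_marking (fun s => M s + post N t s) (remove_nth n U)
  = fun x => embed_marking M U x + post N' t x.
Proof.
  intros HC Hn Hnth. apply functional_extensionality. intros [s|L]; cbn -[Nat.sub]; [reflexivity|].
  specialize (HC L). unfold count_at in *.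
  pose proof (msum_remove_nth (fun u => ind (DT u = L)) n U t Hn Hnth). lia.
Qed.

Lemma embed_fires (M M2 : marking N) (U : list (trans N)) (t : trans N) :
  enabled N' (embed_marking M U) t -> fires N M t M2 ->
  fires N' (embed_marking M U) t (embed_marking M2 U).
Proof.
  intros He [_ Hf]. split; [exact He|]. intros [s|L]; cbn -[Nat.sub]; [apply Hf|].
  specialize (He (inr L)). cbn -[Nat.sub] in He. lia.
Qed.

Lemma fires_of_located (M : marking N) (U : list (trans N)) (t : trans N) (M2' : marking N') :
  fires N' (embed_marking M U) t M2' ->
  fires N M t (fun s => M2' (inl s)) /\ M2' = embed_marking (fun s => M2' (inl s)) U.
Proof.
  intros [He Hf]. split; [split; intros s; [exact (He (inl s)) | exact (Hf (inl s))]|].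
  apply functional_extensionality. intros [s|L]; cbn -[Nat.sub]; [reflexivity|].
  rewrite Hf. specialize (He (inr L)). cbn -[Nat.sub] in *. lia.
Qed.

Lemma embed_step_inv (q : ststate N) (a : stlab Act) (p' : ststate N') :
  st_inv q -> st_step N' (embed q) a p' -> exists q', st_step N q a q' /\ p' = embed q'.
Proof.
  destruct q as [M U]. intros (_ & _ & HC) Hst.
  remember (embed (M, U)) as p eqn:Ep. destruct Hst as [M0 U0 t b Hl He
    | M0 U0 t b n Hn Hnth Hl | M0 M2' U0 t Hl Hf];
    injection Ep as -> ->; cbn [located_net lab] in Hl.
  - exists (fun s => M s - pre N s t, U ++ [t]). split.
    + exact (st_start N M U t b Hl (enabled_of_located M U t He)).
    + simpl. rewrite embed_start. reflexivity.
  - exists (fun s => M s + post N t s, remove_nth n U). split.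
    + apply (st_term N M U t b n); assumption.
    + simpl. rewrite embed_term by assumption. reflexivity.
  - destruct (fires_of_located M U t M2' Hf) as [Hf' E].
    exists (fun s => M2' (inl s), U). split.
    + exact (st_tau N M _ U t Hl Hf').
    + simpl. f_equal. exact E.
Qed.

Section Distributed.
Hypothesis DT_sep : forall t u, concurrent N t u -> lab N t <> None -> DT t <> DT u.

Lemma location_free (M : marking N) (U : list (trans N)) (t : trans N) :
  st_inv (M, U) -> enabled N M t -> count_at (DT t) U = 0.
Proof.
  intros (HR & HV & _) He. apply msum_zero. intros u Hu. apply when_false.
  apply DT_sep; auto. exists (undo_starts M U). split; [exact HR|].
  intros s. pose proof (msum_In_le (pre N s) U u Hu). specialize (He s).
  unfold undo_starts. lia.
Qed.

Lemma st_inv_step (q : ststate N) (a : stlab Act) (q' : ststate N) :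
  st_inv q -> st_step N q a q' -> st_inv q'.
Proof.
  intros Hq Hst.
  destruct Hst as [M U t b Hl He | M U t b n Hn Hnth Hl | M M2 U t Hl [He Hf]];
    pose proof Hq as (HR & HV & HC).
  - pose proof (location_free M U t Hq He) as Hfree. split; [|split].
    + apply (reachable_ext _ _ HR). intros s. specialize (He s).
      unfold undo_starts. rewrite msum_app. unfold msum at 3. simpl. lia.
    + intros u Hu. apply in_app_or in Hu as [Hu|[<-|[]]]; [auto | congruence].
    + intros L. specialize (HC L). unfold count_at in *. rewrite msum_app.
      unfold msum at 2. simpl. destruct (excluded_middle_informative (DT t = L)) as [<-|E].
      * rewrite Hfree, when_true by reflexivity. lia.
      * rewrite when_false by exact E. lia.
  - split; [|split].
    + apply (reach_step N (undo_starts M U) t); [exact HR|].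
      split; intros s; unfold undo_starts; rewrite (msum_remove_nth (pre N s) n U t) by auto; lia.
    + eauto using In_remove_nth.
    + intros L. specialize (HC L). unfold count_at in *.
      rewrite (msum_remove_nth _ n U t) in HC by auto. lia.
  - split; [|split; [exact HV | exact HC]].
    apply (reach_step N (undo_starts M U) t); [exact HR|].
    split; intros s; specialize (He s); unfold undo_starts; rewrite ?Hf; lia.
Qed.

Lemma located_enabled (M : marking N) (U : list (trans N)) (t : trans N) :
  st_inv (M, U) -> enabled N M t -> enabled N' (embed_marking M U) t.
Proof.
  intros Hq He [s|L]; cbn -[Nat.sub]; [exact (He s)|].
  destruct (excluded_middle_informative (DT t = L)) as [<-|E].
  - rewrite (location_free M U t Hq He), when_true by reflexivity. lia.
  - rewrite when_false by exact E. lia.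
Qed.

Lemma embed_step (q : ststate N) (a : stlab Act) (q' : ststate N) :
  st_inv q -> st_step N q a q' -> st_step N' (embed q) a (embed q').
Proof.
  intros Hq Hst.
  destruct Hst as [M U t b Hl He | M U t b n Hn Hnth Hl | M M2 U t Hl Hf]; simpl.
  - rewrite embed_start. exact (st_start N' _ U t b Hl (located_enabled M U t Hq He)).
  - destruct Hq as (_ & _ & HC). rewrite embed_term by assumption.
    exact (st_term N' _ U t b n Hn Hnth Hl).
  - pose proof (located_enabled M U t Hq (proj1 Hf)) as He.
    exact (st_tau N' _ _ U t Hl (embed_fires M M2 U t He Hf)).
Qed.

Lemma located_net_bisimilar : bSTb_div_equiv N' N.
Proof.
  exists (emb_graph _ _ embed st_inv).
  exact (emb_graph_bb_div _ _ _ Tau (st_step N') (st_step N) embed st_inv embed_injective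
    st_inv_step embed_step embed_step_inv (st_init N) st_inv_init).
Qed.

End Distributed.

Section Components.
Variable DS : place N -> Loc.
Hypothesis DT_DS : forall s t, 0 < pre N s t -> DT t = DS s.

Lemma pre_off_location (s : place N) (t : trans N) : DT t <> DS s -> pre N s t = 0.
Proof. intros E. destruct (pre N s t) eqn:P; [reflexivity|]. exfalso. apply E, DT_DS. lia. Qed.

Definition loc_component (k : Loc) : component N' :=
  @Comp Act N'
    (fun x => match x with
              | inl s => DS s = k \/ exists t, DT t = k /\ post N t s <> 0
              | inr L => L = k end)
    (fun t => DT t = k)
    (fun x t => when (DT t = k) (pre N' x t))
    (fun t x => when (DT t = k) (post N' t x))
    (fun x => match x with inl s => when (DS s = k) (init N s) | inr L => ind (L = k) end)
    (lab N)
    (fun x => match x with inl s => DS s = k | inr _ => False end)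
    (fun x => match x with
              | inl s => DS s <> k /\ exists t, DT t = k /\ post N t s <> 0
              | inr _ => False end).

Lemma loc_component_is_component (k : Loc) : is_component (loc_component k).
Proof.
  split; [|split; [|split; [|split; [|split]]]]; simpl.
  - intros x t Hout.
    destruct (excluded_middle_informative (DT t = k)) as [Ht|Ht];
      [|rewrite !when_false by exact Ht; auto].
    rewrite !when_true by exact Ht.
    destruct Hout as [Hx|]; [|contradiction]. destruct x as [s|L]; simpl.
    + split.
      * apply pre_off_location. intros E. apply Hx. left. congruence.
      * destruct (post N t s) eqn:P; [reflexivity|]. exfalso. apply Hx. right.
        exists t. split; [exact Ht | lia].
    + rewrite when_false; [auto | congruence].
  - intros [s|L] Hx; apply when_false; tauto.
  - intros [s|L]; tauto.
  - intros [s|L]; tauto.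
  - intros [s|L]; tauto.
  - intros [s|L] t Ho Ht; [|contradiction]. rewrite when_true by exact Ht.
    apply pre_off_location. destruct Ho as [Ho _]. congruence.
Qed.

Lemma control_place_card1 (k : Loc) (m : place N' -> nat) :
  m (inr k) = 1 -> card1_on m (fun x => x = inr k).
Proof. intros Hm. exists (inr k). split; [reflexivity | split; [exact Hm | congruence]]. Qed.

Lemma loc_component_sequential (k : Loc) : is_sequential (loc_component k).
Proof.
  split; [apply loc_component_is_component|].
  exists (fun x => x = inr k). split; [|split]; simpl.
  - intros x ->. simpl. tauto.
  - intros t Ht. split; apply control_place_card1; simpl; rewrite !when_true; auto.
  - apply control_place_card1. simpl. apply when_true. reflexivity.
Qed.

Lemma is_sum_single {K} (f : K -> nat) (k : K) (n : nat) :
  f k = n -> (forall l, l <> k -> f l = 0) -> is_sum f n.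
Proof.
  intros Hk Hf. exists [k]. split; [constructor; [simpl; tauto | constructor]|split].
  - intros l Hl. left. destruct (excluded_middle_informative (k = l)); [auto|].
    exfalso. apply Hl, Hf. auto.
  - simpl. lia.
Qed.

Lemma loc_components_compose : is_async_composition N' Loc loc_component.
Proof.
  split; [|split; [|split; [|split; [|split]]]]; simpl.
  - intros k l Hkl. split; [|split].
    + intros [s|L]; simpl; split.
      * intros [Hk Hl]. split; [destruct (excluded_middle_informative (DS s = k))
          | destruct (excluded_middle_informative (DS s = l))]; tauto.
      * intros [Hk Hl]. split; [destruct Hk as [Hk|[_ Hk]] | destruct Hl as [Hl|[_ Hl]]]; tauto.
      * intros [Hk Hl]. congruence.
      * tauto.
    + intros t [Hk Hl]. congruence.
    + intros [s|L] [Hk Hl]; [congruence | contradiction].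
  - intros [s|L]; [exists (DS s); left | exists L]; reflexivity.
  - intros t. exists (DT t). reflexivity.
  - intros k x t Ht. rewrite !when_true by exact Ht. auto.
  - reflexivity.
  - intros [s|L]; [apply (is_sum_single _ (DS s)) | apply (is_sum_single _ L)];
      try (apply when_true; reflexivity); intros l Hl; apply when_false; auto.
Qed.

Lemma located_net_LSGA : LSGA N'.
Proof.
  exists Loc, loc_component. split; [exact loc_component_sequential | exact loc_components_compose].
Qed.
End Components.
End LocatedNet.

Theorem theorem4p15 (Act : Type) (N : net Act) :
  ess_distributed N ->
  exists N' : net Act, LSGA N' /\ bSTb_div_equiv N' N.
Proof.
  intros (Loc & DS & DT & HDS & Hsep).
  exists (located_net Act N Loc DT). split.
  - exact (located_net_LSGA Act N Loc DT DS HDS).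
  - exact (located_net_bisimilar Act N Loc DT Hsep).
Qed.
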